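(* Let $G=(K\cup I,E)$ be a split graph and $(V,\mathcal{F})$ the split graph vertex shelling antimatroid defined on $G$. Then the family $\mathcal{F}_*$ of $*$-feasible sets equals the family of filters of the poset $(K\cup I,\prec)$.
   Context: A split graph $G=(K\cup I,E)$ is a finite simple graph whose vertex set $V=K\cup I$ comes with a fixed partition into a clique $K$ and an independent set $I$. We write $u\sim v$ for adjacency; for $F\subseteq V$, $N(F)$ is the set of vertices of $V\setminus F$ adjacent to some vertex of $F$. A vertex is simplicial if its neighbours induce a clique. The split graph vertex shelling antimatroid of $G$ is $(V,\mathcal{F})$ where $F\subseteq V$ is feasible iff there is an ordering $f_1,\dots,f_{|F|}$ of $F$ such that each $f_j$ is simplicial in $G$ minus $\{f_1,\dots,f_{j-1}\}$ (the empty set is feasible). A feasible set $F$ is $*$-feasible if $N(F)\subseteq K$; $\mathcal{F}_*$ is the family of $*$-feasible sets. The strict order $\prec$ on $K\cup I$ is defined by $u\prec v$ iff $u\in K$, $v\in I$ and $u\sim v$ (its reflexive closure is a partial order of height at most two). A filter of a poset is a subset $F$ such that $a\in F$ and $a\preceq b$ imply $b\in F$. *)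

From mathcomp Require Import all_boot.
Set Implicit Arguments. Unset Strict Implicit. Unset Printing Implicit Defensive.

Section SplitGraph.
Variable T : finType.
Variable e : rel T.

Definition simple_graph := symmetric e /\ irreflexive e.

(* G = (K u I, E) split graph, with I = ~: K *)
Definition is_split_graph (K : {set T}) :=
  simple_graph /\
  (forall u v, u \in K -> v \in K -> u != v -> e u v) /\
  (forall u v, u \notin K -> v \notin K -> ~~ e u v).

(* v is simplicial in G minus the vertex set R: v is a vertex of G - R and
   its neighbours in G - R induce a clique *)
Definition simplicial_in (R : {set T}) (v : T) : bool :=
  (v \notin R) &&
  [forall x, forall y,
     [&& x \notin R, y \notin R, e v x, e v y & x != y] ==> e x y].

Fixpoint shelling_from (R : {set T}) (s : seq T) : bool :=
  match s with
  | [::] => true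
  | x :: s' => simplicial_in R x && shelling_from (x |: R) s'
  end.

Definition feasible (F : {set T}) : Prop :=
  exists s : seq T, [/\ uniq s, shelling_from set0 s & [set x in s] = F].

Definition nbhd (F : {set T}) : {set T} :=
  [set v | (v \notin F) && [exists u in F, e u v]].

Definition star_feasible (K : {set T}) (F : {set T}) : Prop :=
  feasible F /\ nbhd F \subset K.

Definition prec (K : {set T}) (u v : T) : bool :=
  [&& u \in K, v \notin K & e u v].

Definition is_filter (K : {set T}) (F : {set T}) : Prop :=
  forall a b, a \in F -> (a == b) || prec K a b -> b \in F.

End SplitGraph.

From mathcomp Require Import all_boot.

Set Implicit Arguments.
Unset Strict Implicit.
Unset Printing Implicit Defensive.

(* Both families are the sets F with N(F) inside K.  For filters this is the
   independence of I: a neighbour outside K of a vertex of F can only hang on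
   a clique vertex, which then precedes it.  Conversely such an F is feasible:
   shell F \ K first (their neighbourhoods lie in the clique K), then F :&: K
   (their remaining neighbours are in K, since a neighbour outside K and
   outside F would lie in N(F)); a vertex whose unshelled neighbours all lie
   in the clique K is simplicial. *)

Section Shelling.
Variables (T : finType) (e : rel T).

Lemma shelling_from_cat (R : {set T}) (s1 s2 : seq T) :
  shelling_from e R (s1 ++ s2) =
  shelling_from e R s1 && shelling_from e (R :|: [set x in s1]) s2.
Proof.
elim: s1 R => [|x s1 IH] R /=.
  by rewrite (_ : R :|: _ = R) //; apply/setP=> y; rewrite !inE orbF.
rewrite IH -andbA; congr (_ && (_ && shelling_from e _ s2)).
by apply/setP=> y; rewrite !inE orbA [(y == x) || _]orbC.
Qed.

End Shelling.

Section SplitGraphShelling.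
Variables (T : finType) (e : rel T) (K : {set T}).
Hypothesis splitK : is_split_graph e K.

Lemma adj_clique (u v : T) : u \in K -> v \in K -> u != v -> e u v.
Proof. by have [_ [cliqueK _]] := splitK; apply: cliqueK. Qed.

Lemma adj_notin_clique (u v : T) : u \notin K -> e u v -> v \in K.
Proof.
have [_ [_ indepI]] := splitK; move=> uK euv.
by apply/negPn/negP=> vK; move: (indepI _ _ uK vK); rewrite euv.
Qed.

Definition nbhd_in_clique (R : {set T}) (x : T) : Prop :=
  forall y, y \notin R -> e x y -> y \in K.

Lemma nbhd_in_cliqueS (R R' : {set T}) (x : T) :
  R \subset R' -> nbhd_in_clique R x -> nbhd_in_clique R' x.
Proof.
move=> sRR' Rx y yR'; apply: Rx; apply: contra yR'; exact: (subsetP sRR').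
Qed.

Lemma simplicial_in_clique (R : {set T}) (x : T) :
  x \notin R -> nbhd_in_clique R x -> simplicial_in e R x.
Proof.
move=> xR Rx; rewrite /simplicial_in xR /=.
apply/forallP=> y; apply/forallP=> z; apply/implyP=> /and5P[yR zR exy exz yz].
by apply: adj_clique => //; apply: Rx.
Qed.

Lemma shelling_from_clique (R : {set T}) (s : seq T) :
  uniq s -> {in s, forall x, x \notin R} ->
  {in s, forall x, nbhd_in_clique R x} -> shelling_from e R s.
Proof.
elim: s R => [//|x s IH] R /= /andP[xs us] sR sclique.
rewrite simplicial_in_clique ?sR ?mem_head //=; last exact: sclique (mem_head _ _).
have sRx : R \subset x |: R by apply: subsetUr.
apply: IH => // [y ys|y ys].
- rewrite in_setU1 negb_or (sR y) ?inE ?ys ?orbT // andbT.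
  by apply: contraNneq xs => <-.
- by apply: nbhd_in_cliqueS sRx _; apply: sclique; rewrite inE ys orbT.
Qed.

Lemma feasible_nbhd_clique (F : {set T}) : nbhd e F \subset K -> feasible e F.
Proof.
move=> NFK; pose sI := enum (F :\: K); pose sK := enum (F :&: K).
exists (sI ++ sK); split.
- rewrite cat_uniq !enum_uniq andbT /=; apply/hasPn=> x.
  by rewrite !mem_enum !inE => /andP[_ ->].
- rewrite shelling_from_cat; apply/andP; split.
    apply: shelling_from_clique => [|x _|x]; rewrite ?enum_uniq ?inE //.
    rewrite mem_enum inE => /andP[xK _] y _; exact: adj_notin_clique.
  apply: shelling_from_clique => [|x|x]; rewrite ?enum_uniq // mem_enum !inE.
    by case/andP=> xF xK; rewrite mem_enum !inE xK.
  case/andP=> xF xK y; rewrite !inE mem_enum !inE /= negb_and negbK => yKF exy.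
  apply/negPn/negP=> yK; move: yKF; rewrite (negbTE yK) /= => yF.
  have : y \in nbhd e F by rewrite inE yF; apply/existsP; exists x; rewrite xF.
  by move/(subsetP NFK); rewrite (negbTE yK).
- apply/setP=> x; rewrite !inE mem_cat !mem_enum !inE.
  by case: (x \in K); case: (x \in F).
Qed.

Lemma filterE (F : {set T}) : is_filter e K F <-> nbhd e F \subset K.
Proof.
split=> [filtF | NFK a b aF].
- apply/subsetP=> v; rewrite inE => /andP[vF /existsP[u /andP[uF euv]]].
  apply/negPn/negP=> vK; apply/negP: vF; rewrite negbK (filtF u) //.
  have uK : u \in K := contraR (fun uK => adj_notin_clique uK euv) vK.
  by rewrite /prec uK vK euv orbT.
- case/orP=> [/eqP <- // | /and3P[aK bK eab]].
  apply/negPn/negP=> bF; apply/negP: bK; rewrite negbK (subsetP NFK) //.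
  by rewrite inE bF; apply/existsP; exists a; rewrite aF.
Qed.

End SplitGraphShelling.

Theorem mainTheorem8 (T : finType) (e : rel T) (K : {set T}) :
  is_split_graph e K ->
  forall F : {set T}, star_feasible e K F <-> is_filter e K F.
Proof.
move=> splitK F; split=> [[_ NFK] | /(filterE splitK) NFK].
  exact/(filterE splitK).
exact: conj (feasible_nbhd_clique splitK NFK) NFK.
Qed.
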